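(* Let $M,K\ge2$, $Q\ge1$. Consider the family $\mathcal{I}$ of inequalities, indexed by $z\in[Q]$ and tuples $(\mathcal{V}^{(1)},\dots,\mathcal{V}^{(K)})$ of non-empty subsets of $[M]$ with $\mathcal{V}^{(k)}\ne[M]$ for at least one $k$, $$P'\big(Y(x_1)\in\mathcal{V}^{(1)},\dots,Y(x_K)\in\mathcal{V}^{(K)}\big)\le \sum_{k=1}^K P\big(X=k,\,Y\in\mathcal{V}^{(k)}\mid Z=z\big),$$ in the unknowns $P'$ (a distribution on $[M]^K$) and $P(\cdot,\cdot\mid Z=z)$ (distributions on $[K]\times[M]$, $z\in[Q]$). Let $\mathcal{S}\subseteq\mathcal{I}$ consist of those inequalities whose tuple satisfies either (1) there exist $k\ne k^*$ with $\mathcal{V}^{(k)}\ne[M]$ and $\mathcal{V}^{(k^* )}\ne[M]$; or (2) there exist $k^*\in[K]$ and $m\in[M]$ such that $\mathcal{V}^{(k^* )}=[M]\setminus\{m\}$ and $\mathcal{V}^{(k)}=[M]$ for all $k\ne k^*$. Then $\mathcal{S}$ is equivalent to $\mathcal{I}$ (they define the same set of $(P',P(\cdot,\cdot\mid Z))$), $\mathcal{S}$ is non-redundant, and $\mathcal{S}$ has $QK(2^M-M-2)$ fewer inequalities than $\mathcal{I}$.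
   Context: Notation $[n]=\{1,\dots,n\}$. For each fixed $z\in[Q]$, the inequalities with index $z$, together with the constraints that $P'$ and $P(\cdot,\cdot\mid Z=z)$ are probability distributions, define a polytope of pairs $(P',P(\cdot,\cdot\mid Z=z))$. Relative to a set of inequalities, an individual inequality is redundant if it is implied by the remaining inequalities of the set (and the probability-simplex constraints); a set is non-redundant if none of its inequalities is redundant. (The family $\mathcal{I}$ characterizes exactly the pairs of joint counterfactual distribution of $(Y(x_1),\dots,Y(x_K))$ and observed distributions $P(X,Y\mid Z)$ compatible with standard instrumental variable models with $Y\in[M]$, $X\in[K]$, $Z\in[Q]$.) *)

From HB Require Import structures.
From mathcomp Require Import all_boot all_order all_algebra.
Set Implicit Arguments. Unset Strict Implicit. Unset Printing Implicit Defensive.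
Import Order.TTheory GRing.Theory Num.Theory.
Local Open Scope ring_scope.

(* Y takes values in 'I_M (= [M]), X in 'I_K (= [K]), Z in 'I_Q (= [Q]).
   A tuple (V^(1),...,V^(K)) of subsets of [M] is V : {ffun 'I_K -> {set 'I_M}}.
   The joint counterfactual outcome (Y(x_1),...,Y(x_K)) is y : {ffun 'I_K -> 'I_M}. *)

Definition is_distr (R : realFieldType) (T : finType) (p : {ffun T -> R}) : Prop :=
  (forall t, 0 <= p t) /\ \sum_t p t = 1.

Definition tupleI (M K : nat) (V : {ffun 'I_K -> {set 'I_M}}) : bool :=
  [forall k, V k != set0] && [exists k, V k != setT].

Definition tupleS (M K : nat) (V : {ffun 'I_K -> {set 'I_M}}) : bool :=
  tupleI V &&
  ([exists k, exists k', [&& k != k', V k != setT & V k' != setT]]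
   || [exists k, exists m, (V k == [set~ m]) &&
                           [forall k', (k' != k) ==> (V k' == setT)]]).

Definition famI (M K Q : nat) : {set 'I_Q * {ffun 'I_K -> {set 'I_M}}} :=
  [set zV | tupleI zV.2].
Definition famS (M K Q : nat) : {set 'I_Q * {ffun 'I_K -> {set 'I_M}}} :=
  [set zV | tupleS zV.2].

Definition ineq_holds (R : realFieldType) (M K : nat)
  (P' : {ffun {ffun 'I_K -> 'I_M} -> R}) (p : {ffun 'I_K * 'I_M -> R})
  (V : {ffun 'I_K -> {set 'I_M}}) : Prop :=
  \sum_(y : {ffun 'I_K -> 'I_M} | [forall k, y k \in V k]) P' y <= \sum_k \sum_(m in V k) p (k, m).

From HB Require Import structures.
From mathcomp Require Import all_boot all_order all_algebra.
From mathcomp Require Import lra zify ring.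
Set Implicit Arguments. Unset Strict Implicit. Unset Printing Implicit Defensive.
Import Order.TTheory GRing.Theory Num.Theory.
Local Open Scope ring_scope.

(* An inequality of [I] outside [S] has a single non-full coordinate [k], say with
   [V^(k) = A].  Passing to complements, it reads
   [P(X = k, Y \notin A | z) <= P'(Y(x_k) \notin A)], which is the sum over [m \notin A]
   of the inequalities [P(X = k, Y = m | z) <= P'(Y(x_k) = m)] of type (2); this gives
   the equivalence.  For non-redundancy, each inequality of [S] is violated by a pair
   built from uniform laws (a mixture of two product laws for type (1), a single one for
   type (2)) that satisfies all the other inequalities: masses of uniform laws on
   subsets of [[M]] never fall in [(0, 1/M)] or [(1 - 1/M, 1)], which gives the needed
   slack.  Finally, the tuples of [I] outside [S] are the [tuple_at k A] with [A] neither
   empty, full nor the complement of a point: [K (2^M - M - 2)] of them for each [z]. *)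

Section Distributions.
Variable R : realFieldType.

Lemma prodr_le_subprod (I : finType) (F : I -> R) (P : pred I) :
  (forall i, 0 <= F i <= 1) -> \prod_i F i <= \prod_(i | P i) F i.
Proof.
move=> F01; rewrite (bigID P) /= -[leRHS]mulr1 ler_wpM2l ?prodr_ile1 //.
by apply: prodr_ge0 => i _; case/andP: (F01 i).
Qed.

Lemma prodr_le_factor (I : finType) (F : I -> R) (j : I) :
  (forall i, 0 <= F i <= 1) -> \prod_i F i <= F j.
Proof. by move=> F01; rewrite (le_trans (prodr_le_subprod (pred1 j) F01)) // big_pred1_eq. Qed.

Lemma prodr_le_pair (I : finType) (F : I -> R) (i j : I) :
  i != j -> (forall i, 0 <= F i <= 1) -> \prod_k F k <= F i * F j.
Proof.
move=> ij F01; suff <- : \prod_(k | pred2 i j k) F k = F i * F j by exact: prodr_le_subprod.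
rewrite (bigD1 i) /= ?eqxx //; congr (_ * _); apply: big_pred1 => k /=.
by case: (eqVneq k i) => [->|]; rewrite ?(negbTE ij) ?andbT.
Qed.

Lemma sumr_ge_term (I : finType) (F : I -> R) (j : I) :
  (forall i, 0 <= F i) -> F j <= \sum_i F i.
Proof. by move=> F0; rewrite (bigD1 j) //= lerDl sumr_ge0. Qed.

Lemma sumr_compl (T : finType) (F : T -> R) (P : pred T) :
  \sum_t F t = 1 -> \sum_(t | P t) F t = 1 - \sum_(t | ~~ P t) F t.
Proof. by move=> F1; rewrite -F1 [X in _ = X - _](bigID P) /= addrK. Qed.

Lemma sum_pair (I T : finType) (F : I * T -> R) : \sum_it F it = \sum_i \sum_t F (i, t).
Proof. by rewrite pair_big; apply: eq_bigr => -[]. Qed.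

Lemma ratio_gap (a n N : nat) : (0 < n)%N -> (n <= N)%N -> (a <= n)%N ->
  let x : R := a%:R / n%:R in (x < 1 -> x <= 1 - N%:R^-1) /\ (0 < x -> N%:R^-1 <= x).
Proof.
move=> n0 nN an x; rewrite {}/x; have n0R : 0 < n%:R :> R by rewrite ltr0n.
have invN : N%:R^-1 <= n%:R^-1 :> R by rewrite lef_pV2 ?posrE ?ltr0n ?ler_nat //; lia.
split.
- move=> lt1; have a1n : (a < n)%N.
    by rewrite ltnNge; apply: contraTN lt1 => na; rewrite -leNgt ler_pdivlMr // mul1r ler_nat.
  suff : a%:R / n%:R <= 1 - n%:R^-1 :> R by lra.
  by rewrite ler_pdivrMr // mulrBl mul1r mulVf ?gt_eqF // lerBrDr natr1 ler_nat.
- move=> gt0; have a0 : (0 < a)%N by rewrite lt0n; apply: contraTneq gt0 => ->; rewrite mul0r ltxx.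
  suff : n%:R^-1 <= a%:R / n%:R :> R by lra.
  by rewrite -[X in X <= _]mul1r ler_pM2r ?invr_gt0 // ler1n.
Qed.

(* [unif set0] is the zero function, since [x / 0 = 0]. *)
Definition unif (T : finType) (A : {set T}) : {ffun T -> R} :=
  [ffun t => (t \in A)%:R / #|A|%:R].

Definition mix (T : finType) (t : R) (p q : {ffun T -> R}) : {ffun T -> R} :=
  [ffun x => t * p x + (1 - t) * q x].

Definition prod_distr (I T : finType) (F : I -> {ffun T -> R}) :
  {ffun {ffun I -> T} -> R} :=
  [ffun y : {ffun I -> T} => \prod_i F i (y i)].

Definition joint (I T : finType) (w : {ffun I -> R}) (q : I -> {ffun T -> R}) :
  {ffun I * T -> R} := [ffun it => w it.1 * q it.1 it.2].

Section Uniform.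
Variables (T : finType) (A : {set T}).

Lemma sum_unif (W : {set T}) : \sum_(t in W) unif A t = #|W :&: A|%:R / #|A|%:R.
Proof.
under eq_bigr do rewrite ffunE.
rewrite -mulr_suml -[#|W :&: A|]sum1_card natr_sum big_mkcond [in RHS]big_mkcond /=.
by congr (_ * _); apply: eq_bigr => t _; rewrite !inE; case: (t \in W); case: (t \in A).
Qed.

Lemma unif_ge0 t : 0 <= unif A t.
Proof. by rewrite ffunE divr_ge0. Qed.

Lemma is_distr_unif : A != set0 -> is_distr (unif A).
Proof.
rewrite -card_gt0 => A0; split=> [|]; first exact: unif_ge0.
have -> : \sum_t unif A t = \sum_(t in [set: T]) unif A t by apply: eq_bigl => t; rewrite inE.
by rewrite sum_unif setTI divff // pnatr_eq0 -lt0n.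
Qed.

Lemma unif_mass_bounds (W : {set T}) : 0 <= \sum_(t in W) unif A t <= 1.
Proof.
rewrite sum_unif divr_ge0 //=; have [->|A0] := eqVneq A set0; first by rewrite cards0 invr0 mulr0.
by rewrite ler_pdivrMr ?mul1r ?ler_nat ?ltr0n ?card_gt0 // subset_leq_card ?subsetIr.
Qed.

Lemma unif_mass_eq1 (W : {set T}) :
  A != set0 -> (\sum_(t in W) unif A t == 1) = (A \subset W).
Proof.
rewrite -card_gt0 => A0; rewrite sum_unif -(inj_eq (mulIf (x := #|A|%:R) _)) ?pnatr_eq0 -?lt0n //.
rewrite mulfVK ?pnatr_eq0 -?lt0n // mul1r eqr_nat.
apply/eqP/idP => [e | /setIidPr -> //].
have /eqP <- : W :&: A == A by rewrite eqEcard subsetIr e leqnn.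
exact: subsetIl.
Qed.

Lemma unif_mass_eq0 (W : {set T}) : (\sum_(t in W) unif A t == 0) = (W :&: A == set0).
Proof.
rewrite sum_unif mulf_eq0 invr_eq0 !pnatr_eq0 !cards_eq0.
by case: (eqVneq A set0) => [->|]; rewrite ?setI0 ?eqxx ?orbF.
Qed.

Lemma unif_mass_gap (W : {set T}) :
  let x := \sum_(t in W) unif A t in
  (x < 1 -> x <= 1 - #|T|%:R^-1) /\ (0 < x -> #|T|%:R^-1 <= x).
Proof.
rewrite sum_unif; have [->|A0] := eqVneq A set0.
  rewrite cards0 invr0 mulr0; split=> [_|]; last by rewrite ltxx.
  by rewrite subr_ge0; have [->|T0] := posnP #|T|; rewrite ?invr0 // invf_le1 ?ler1n ?ltr0n.
by apply: ratio_gap; rewrite ?card_gt0 ?max_card ?subset_leq_card ?subsetIr.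
Qed.

Lemma unif_set1 (a t : T) : unif [set a] t = (t == a)%:R.
Proof. by rewrite ffunE cards1 divr1 inE. Qed.

Lemma sum_unif_set1 (a : T) (P : pred T) : \sum_(t | P t) unif [set a] t = (P a)%:R.
Proof.
rewrite big_mkcond (bigD1 a) //= big1 ?addr0 => [|t ta]; rewrite unif_set1 ?eqxx.
  by case: (P a).
by rewrite (negbTE ta); case: (P t).
Qed.

Lemma sum_unif_set1_mul (a : T) (G : T -> R) : \sum_t unif [set a] t * G t = G a.
Proof.
rewrite (bigD1 a) //= big1 ?addr0 => [|t ta]; rewrite unif_set1 ?eqxx ?mul1r //.
by rewrite (negbTE ta) mul0r.
Qed.

End Uniform.

Lemma sum_mix (T : finType) (t : R) (p q : {ffun T -> R}) (P : pred T) :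
  \sum_(x | P x) mix t p q x = t * \sum_(x | P x) p x + (1 - t) * \sum_(x | P x) q x.
Proof. by rewrite !mulr_sumr -big_split; apply: eq_bigr => x _; rewrite ffunE. Qed.

Lemma is_distr_mix (T : finType) (t : R) (p q : {ffun T -> R}) :
  0 <= t <= 1 -> is_distr p -> is_distr q -> is_distr (mix t p q).
Proof.
case/andP=> t0 t1 [p0 p1] [q0 q1]; split; last by rewrite sum_mix p1 q1; ring.
by move=> x; rewrite ffunE addr_ge0 ?mulr_ge0 ?subr_ge0.
Qed.

Lemma sum_prod_distr_box (I T : finType) (F : I -> {ffun T -> R}) (W : I -> {set T}) :
  \sum_(y : {ffun I -> T} | [forall i, y i \in W i]) prod_distr F y
  = \prod_i \sum_(t in W i) F i t.
Proof.
under [RHS]eq_bigr do rewrite big_mkcond.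
rewrite bigA_distr_bigA /= big_mkcond /=; apply: eq_bigr => y _; rewrite ffunE.
case: forallP => [yW | /forallP]; first by apply: eq_bigr => i _; rewrite yW.
by rewrite negb_forall => /existsP[i yi]; rewrite (bigD1 i) //= (negbTE yi) mul0r.
Qed.

Lemma is_distr_prod_distr (I T : finType) (F : I -> {ffun T -> R}) :
  (forall i, is_distr (F i)) -> is_distr (prod_distr F).
Proof.
move=> dF; split=> [y | ]; first by rewrite ffunE prodr_ge0 // => i _; case: (dF i).
rewrite (eq_bigl (fun y : {ffun I -> T} => [forall i, y i \in [set: T]])); last first.
  by move=> y; apply/esym/forallP => i; rewrite inE.
rewrite sum_prod_distr_box big1 // => i _.
by case: (dF i) => _ <-; apply: eq_bigl => t; rewrite inE.
Qed.

Lemma sum_joint_box (I T : finType) (w : {ffun I -> R}) (q : I -> {ffun T -> R})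
    (W : I -> {set T}) :
  \sum_i \sum_(t in W i) joint w q (i, t) = \sum_i w i * \sum_(t in W i) q i t.
Proof. by apply: eq_bigr => i _; rewrite mulr_sumr; apply: eq_bigr => t _; rewrite ffunE. Qed.

Lemma is_distr_joint (I T : finType) (w : {ffun I -> R}) (q : I -> {ffun T -> R}) :
  is_distr w -> (forall i, is_distr (q i)) -> is_distr (joint w q).
Proof.
move=> [w0 w1] dq; split=> [[i t] | ].
  by rewrite ffunE mulr_ge0 //; case: (dq i).
rewrite sum_pair -w1; apply: eq_bigr => i _; rewrite -[RHS]mulr1.
by case: (dq i) => _ <-; rewrite mulr_sumr; apply: eq_bigr => t _; rewrite ffunE.
Qed.

End Distributions.

Arguments unif {R T} A.

Section MixtureBounds.
Variables (R : realFieldType) (I : finType) (x y c e : I -> R) (d : R).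
Hypotheses (x01 : forall i, 0 <= x i <= 1) (y01 : forall i, 0 <= y i <= 1).
Hypotheses (c0 : forall i, 0 <= c i) (e0 : forall i, 0 <= e i).
Hypotheses (ce1 : \sum_i c i + \sum_i e i = 1) (d0 : 0 <= d).

Lemma scaled_prod_le_sum (a : R) :
  0 <= a <= \sum_i e i -> a * \prod_i y i <= \sum_i e i * y i.
Proof.
case/andP=> a0 aE; have Y0 : 0 <= \prod_i y i by apply: prodr_ge0 => i _; case/andP: (y01 i).
apply: le_trans (ler_wpM2r Y0 aE) _; rewrite mulr_suml; apply: ler_sum => i _.
by rewrite ler_wpM2l // prodr_le_factor.
Qed.

Lemma weighted_prod_le (j : I) :
  (\sum_(i | i != j) c i + d) * x j <= \sum_(i | i != j) c i ->
  (\sum_i c i + d) * \prod_i x i <= \sum_i c i * x i.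
Proof.
set E := \sum_(i | i != j) c i => hj.
pose P := \prod_(i | i != j) x i.
have /andP[P0 P1] : 0 <= P <= 1 by rewrite prodr_ge0 ?prodr_ile1 // => i _; case/andP: (x01 i).
have /andP[xj0 xj1] := x01 j.
have EP : E * P <= \sum_(i | i != j) c i * x i.
  rewrite /E mulr_suml; apply: ler_sum => i ij; rewrite ler_wpM2l //.
  by rewrite /P (bigD1 i) //= ler_piMr ?prodr_ile1 //; case/andP: (x01 i).
rewrite (bigD1 j) //= -/E [X in _ * X](bigD1 j) //= -/P (bigD1 j) //=.
have : c j * x j * P <= c j * x j by rewrite ler_piMr ?mulr_ge0.
have : (E + d) * x j * P <= E * P by rewrite ler_wpM2r.
nra.
Qed.

Lemma mixture_le_of_gap (j : I) :
  (\sum_(i | i != j) c i + d) * x j <= \sum_(i | i != j) c i -> d <= \sum_i e i ->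
  (\sum_i c i + d) * \prod_i x i + (1 - (\sum_i c i + d)) * \prod_i y i
    <= \sum_i c i * x i + \sum_i e i * y i.
Proof.
move=> hj dE; apply: lerD; first exact: weighted_prod_le hj.
have a_bounds : 0 <= 1 - (\sum_i c i + d) <= \sum_i e i.
  by apply/andP; split; have := ce1; have := d0; lra.
exact: scaled_prod_le_sum.
Qed.

Lemma mixture_le_of_full :
  (forall i, x i = 1) -> d <= \sum_i e i * (y i - \prod_k y k) ->
  (\sum_i c i + d) * \prod_i x i + (1 - (\sum_i c i + d)) * \prod_i y i
    <= \sum_i c i * x i + \sum_i e i * y i.
Proof.
move=> x1 gap; set Y := \prod_k y k.
have Y0 : 0 <= Y by apply: prodr_ge0 => i _; case/andP: (y01 i).
have -> : \prod_i x i = 1 by apply: big1 => i _.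
have -> : \sum_i c i * x i = \sum_i c i by apply: eq_bigr => i _; rewrite x1 mulr1.
have -> : \sum_i e i * y i = \sum_i e i * (y i - Y) + (\sum_i e i) * Y.
  by rewrite mulr_suml -big_split; apply: eq_bigr => i _ /=; ring.
have -> : 1 - (\sum_i c i + d) = \sum_i e i - d by have := ce1; lra.
have : 0 <= d * Y by rewrite mulr_ge0.
lra.
Qed.

End MixtureBounds.

Lemma exists_other (T : finType) (t : T) : (1 < #|T|)%N -> exists t', t' != t.
Proof.
move=> T1; have : (0 < #|predC1 t|)%N by rewrite cardC1; lia.
by case/card_gt0P => t' ht'; exists t'.
Qed.

Lemma setC1_neq0 (T : finType) (t : T) : (1 < #|T|)%N -> [set~ t] != set0.
Proof. by case/(exists_other t) => t' ht'; apply/set0Pn; exists t'; rewrite in_setC1. Qed.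

Lemma setC1_neqT (T : finType) (t : T) : [set~ t] != setT.
Proof. by apply/eqP => /setP /(_ t); rewrite !inE eqxx. Qed.

Definition tuple_at (M K : nat) (k0 : 'I_K) (A : {set 'I_M}) : {ffun 'I_K -> {set 'I_M}} :=
  [ffun k => if k == k0 then A else setT].

Lemma tuple_at_id (M K : nat) (k0 : 'I_K) (A : {set 'I_M}) : tuple_at k0 A k0 = A.
Proof. by rewrite ffunE eqxx. Qed.

Lemma tuple_at_full (M K : nat) (k0 k : 'I_K) (A : {set 'I_M}) :
  k != k0 -> tuple_at k0 A k = setT.
Proof. by rewrite ffunE => /negbTE ->. Qed.

Lemma tupleI_tuple_at (M K : nat) (k0 : 'I_K) (A : {set 'I_M}) :
  A != set0 -> A != setT -> tupleI (tuple_at k0 A).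
Proof.
move=> A0 AT; apply/andP; split; last by apply/existsP; exists k0; rewrite tuple_at_id.
apply/forallP => k; rewrite ffunE; case: ifP => // _.
by case/set0Pn: A0 => t _; apply/set0Pn; exists t; rewrite inE.
Qed.

Lemma tupleS_setC1 (M K : nat) (k0 : 'I_K) (m : 'I_M) :
  (1 < M)%N -> tupleS (tuple_at k0 [set~ m]).
Proof.
move=> M1; rewrite /tupleS tupleI_tuple_at ?setC1_neq0 ?setC1_neqT ?card_ord //=.
apply/orP; right; apply/existsP; exists k0; apply/existsP; exists m.
rewrite tuple_at_id eqxx /=; apply/forallP => k; apply/implyP => kk0.
by rewrite tuple_at_full.
Qed.

Lemma tupleI_notS_single (M K : nat) (V : {ffun 'I_K -> {set 'I_M}}) :
  tupleI V -> ~~ tupleS V -> exists k0, V k0 != setT /\ V = tuple_at k0 (V k0).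
Proof.
rewrite /tupleS => VI; rewrite VI /= negb_or => /andP[no_pair _].
case/andP: VI => _ /existsP[k0 Vk0]; exists k0; split=> //.
apply/ffunP => k; rewrite ffunE; case: (eqVneq k k0) => [-> // | kk0].
apply/eqP; apply: contraNT no_pair => Vk.
by apply/existsP; exists k0; apply/existsP; exists k; rewrite eq_sym kk0 Vk0 Vk.
Qed.

Lemma tupleS_eq_setC1 (M K : nat) (V : {ffun 'I_K -> {set 'I_M}}) (k0 : 'I_K) (m : 'I_M) :
  tupleS V -> m \notin V k0 -> (forall k, k != k0 -> V k = setT) -> V = tuple_at k0 [set~ m].
Proof.
move=> /andP[_ /orP[pair | single]] mV Vfull.
  case/existsP: pair => a /existsP[b /and3P[ab Va Vb]]; exfalso.
  case: (eqVneq a k0) => [ak0 | /Vfull]; last by apply/eqP.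
  by move: Vb; rewrite Vfull ?eqxx // -ak0 eq_sym.
case/existsP: single => a /existsP[m' /andP[/eqP Va /forallP Vothers]].
have ak0 : a = k0.
  apply/eqP; apply: contraNT mV => ak0.
  have k0a : k0 != a by rewrite eq_sym.
  by have /eqP -> := implyP (Vothers k0) k0a; rewrite inE.
apply/ffunP => k; rewrite ffunE; case: (eqVneq k k0) => [-> | /Vfull //].
by move: mV; rewrite -ak0 Va in_setC1 negbK => /eqP ->.
Qed.

Section Equivalence.
Variables (R : realFieldType) (M K : nat).
Variables (P' : {ffun {ffun 'I_K -> 'I_M} -> R}) (p : {ffun 'I_K * 'I_M -> R}).
Hypotheses (P'_distr : is_distr P') (p_distr : is_distr p).

Lemma ineq_holds_tuple_at (k0 : 'I_K) (A : {set 'I_M}) :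
  ineq_holds P' p (tuple_at k0 A) <->
  \sum_(m | m \notin A) p (k0, m) <= \sum_(y : {ffun 'I_K -> 'I_M} | y k0 \notin A) P' y.
Proof.
have box (y : {ffun 'I_K -> 'I_M}) : [forall k, y k \in tuple_at k0 A k] = (y k0 \in A).
  apply/forallP/idP => [/(_ k0) | yk0 k]; first by rewrite tuple_at_id.
  by case: (eqVneq k k0) => [-> | /tuple_at_full ->]; rewrite ?tuple_at_id ?inE.
have rhs : \sum_k \sum_(m in tuple_at k0 A k) p (k, m) = 1 - \sum_(m | m \notin A) p (k0, m).
  case: p_distr => _; rewrite sum_pair => <-; rewrite (bigD1 k0) //= [in RHS](bigD1 k0) //=.
  rewrite [\sum_(m < M) p (k0, m)](bigID (mem A)) /= tuple_at_id.
  have -> : \sum_(k | k != k0) \sum_(m in tuple_at k0 A k) p (k, m)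
          = \sum_(k | k != k0) \sum_m p (k, m).
    by apply: eq_bigr => k /tuple_at_full Vk; apply: eq_bigl => m; rewrite Vk inE.
  by rewrite addrAC addrK.
rewrite /ineq_holds (eq_bigl _ _ box) (sumr_compl _ (proj2 P'_distr)) rhs.
by split=> h; lra.
Qed.

Lemma ineq_holds_setC1 (k0 : 'I_K) (m : 'I_M) :
  ineq_holds P' p (tuple_at k0 [set~ m]) <->
  p (k0, m) <= \sum_(y : {ffun 'I_K -> 'I_M} | y k0 == m) P' y.
Proof.
have notin m' : (m' \notin [set~ m]) = (m' == m) by rewrite in_setC1 negbK.
rewrite ineq_holds_tuple_at (eq_bigl _ _ notin) big_pred1_eq.
by rewrite (eq_bigl _ _ (fun y : {ffun 'I_K -> 'I_M} => notin (y k0))).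
Qed.

Lemma ineq_holds_tuple_at_of_setC1 (k0 : 'I_K) (A : {set 'I_M}) :
  (forall m, ineq_holds P' p (tuple_at k0 [set~ m])) -> ineq_holds P' p (tuple_at k0 A).
Proof.
move=> hC1; apply/ineq_holds_tuple_at.
rewrite (partition_big (fun y : {ffun 'I_K -> 'I_M} => y k0) (fun m => m \notin A)) //=.
apply: ler_sum => m mA; rewrite (eq_bigl (fun y : {ffun 'I_K -> 'I_M} => y k0 == m)).
  exact/ineq_holds_setC1.
by move=> y; case: (eqVneq (y k0) m) => [->|]; rewrite ?mA ?andbF.
Qed.

Lemma ineq_holds_of_tupleS (V : {ffun 'I_K -> {set 'I_M}}) : (1 < M)%N ->
  (forall V', tupleS V' -> ineq_holds P' p V') -> tupleI V -> ineq_holds P' p V.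
Proof.
move=> M1 hS VI; have [VS | /(tupleI_notS_single VI)[k0 [_ ->]]] := boolP (tupleS V).
  exact: hS.
by apply: ineq_holds_tuple_at_of_setC1 => m; apply/hS/tupleS_setC1.
Qed.

End Equivalence.

(* The witness for [tuple_at k0 [set~ m]]: [Y(x_k0) = m1] surely and the other
   counterfactuals are independent and uniform, while [X = k0] and [Y] is [m] with
   probability [1/M] and [m1] otherwise. *)
Section SetC1Witness.
Variables (R : realFieldType) (M K : nat) (k0 : 'I_K) (m m1 : 'I_M).
Hypotheses (M1 : (1 < M)%N) (m1m : m1 != m).

Let eps : R := M%:R^-1.
Let coord k : {set 'I_M} := if k == k0 then [set m1] else setT.
Let P' : {ffun {ffun 'I_K -> 'I_M} -> R} := prod_distr (fun k => unif (coord k)).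
Let p : {ffun 'I_K * 'I_M -> R} :=
  joint (unif [set k0]) (fun=> mix eps (unif [set m]) (unif [set m1])).

Let eps_gt0 : 0 < eps. Proof. by rewrite invr_gt0 ltr0n; lia. Qed.
Let eps_le1 : eps <= 1. Proof. by rewrite invf_le1 ?ler1n ?ltr0n; lia. Qed.

Let lhs_eq (W : {ffun 'I_K -> {set 'I_M}}) :
  \sum_(y : {ffun 'I_K -> 'I_M} | [forall k, y k \in W k]) P' y
  = \prod_k \sum_(t in W k) unif (coord k) t.
Proof. exact: sum_prod_distr_box. Qed.

Let rhs_eq (W : {ffun 'I_K -> {set 'I_M}}) :
  \sum_k \sum_(t in W k) p (k, t) = eps * (m \in W k0)%:R + (1 - eps) * (m1 \in W k0)%:R.
Proof. by rewrite sum_joint_box sum_unif_set1_mul sum_mix !sum_unif_set1. Qed.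

Let witness_distr : is_distr P' /\ is_distr p.
Proof.
split; first by apply: is_distr_prod_distr => k; apply: is_distr_unif; rewrite /coord;
  case: ifP => _; apply/set0Pn; [exists m1 | exists m]; rewrite inE.
apply: is_distr_joint => [|_]; first by apply: is_distr_unif; apply/set0Pn; exists k0; rewrite inE.
by apply: is_distr_mix; rewrite ?eps_le1 ?(ltW eps_gt0) //; apply: is_distr_unif;
  apply/set0Pn; [exists m | exists m1]; rewrite inE.
Qed.

Let witness_violates : ~ ineq_holds P' p (tuple_at k0 [set~ m]).
Proof.
rewrite /ineq_holds lhs_eq rhs_eq !ffunE !eqxx !in_setC1 eqxx m1m /= mulr0 add0r mulr1.
rewrite big1 => [|k _]; first by have := eps_gt0; lra.
rewrite /coord; case: eqVneq => [-> | kk0].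
  by rewrite tuple_at_id sum_unif_set1 in_setC1 m1m.
apply/eqP; rewrite tuple_at_full // unif_mass_eq1 ?subxx //.
by apply/set0Pn; exists m; rewrite inE.
Qed.

Let witness_satisfies (W : {ffun 'I_K -> {set 'I_M}}) :
  tupleS W -> W != tuple_at k0 [set~ m] -> ineq_holds P' p W.
Proof.
move=> WS WnC1; rewrite /ineq_holds lhs_eq rhs_eq.
have mass_k0 : \sum_(t in W k0) unif (coord k0) t = (m1 \in W k0)%:R :> R.
  by rewrite /coord eqxx sum_unif_set1.
have [m1W | m1W] := boolP (m1 \in W k0); last first.
  rewrite (bigD1 k0) //= mass_k0 (negbTE m1W) mulr0n mul0r mulr0 addr0.
  by rewrite mulr_ge0 ?ler0n ?(ltW eps_gt0).
have [mW | mW] := boolP (m \in W k0).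
  rewrite !mulr1 subrKC prodr_ile1 // => k _; exact: unif_mass_bounds.
have [k kk0 Wk] : exists2 k, k != k0 & W k != setT.
  apply/exists_inP; apply: contraNT WnC1; rewrite negb_exists_in => /forall_inP Wfull.
  by apply/eqP/(tupleS_eq_setC1 WS mW) => k /Wfull /negPn /eqP.
rewrite mulr0 add0r mulr1.
apply: le_trans (prodr_le_factor k _) _ => [k' | ]; first exact: unif_mass_bounds.
have [lt1 _] := unif_mass_gap R (coord k) (W k); rewrite card_ord in lt1; apply: lt1.
rewrite lt_neqAle unif_mass_eq1; last by rewrite /coord (negbTE kk0); apply/set0Pn; exists m.
rewrite /coord (negbTE kk0) subTset Wk /=.
by case/andP: (unif_mass_bounds R [set: 'I_M] (W k)).
Qed.

Lemma tuple_setC1_nonredundant :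
  exists (P' : {ffun {ffun 'I_K -> 'I_M} -> R}) (p : {ffun 'I_K * 'I_M -> R}),
    [/\ is_distr P', is_distr p,
        (forall W, tupleS W -> W != tuple_at k0 [set~ m] -> ineq_holds P' p W)
      & ~ ineq_holds P' p (tuple_at k0 [set~ m])].
Proof.
have [dP dp] := witness_distr.
by exists P', p; split; [| | exact: witness_satisfies | exact: witness_violates].
Qed.

End SetC1Witness.

(* The witness for a tuple [V] with two non-full coordinates: with weights [l] and
   [1 - l], [P'] mixes the product of the uniform laws on the [V k] with the product of
   the uniform laws on their complements; [X] is uniform and [Y | X = k] is the even
   mixture of the two uniform laws of coordinate [k].  The inequality of [V] then fails
   by [d], while the masses of uniform laws avoid [(0, 1/M)] and [(1 - 1/M, 1)], which
   leaves a slack of at least [d = h / M^2] in every other inequality of [I]. *)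
Section TwoNonfullWitness.
Variables (R : realFieldType) (M K : nat) (V : {ffun 'I_K -> {set 'I_M}}) (ka kb : 'I_K).
Hypotheses (M1 : (1 < M)%N) (VI : tupleI V).
Hypotheses (kab : ka != kb) (Vka : V ka != setT) (Vkb : V kb != setT).

Let full k := V k == setT.
(* The complement of a full [V k] is empty; replacing it by [setT] makes [nu k = mu k]. *)
Let Vc k : {set 'I_M} := if full k then setT else ~: V k.
Let mu k : {ffun 'I_M -> R} := unif (V k).
Let nu k : {ffun 'I_M -> R} := unif (Vc k).
Let eps : R := M%:R^-1.
Let h : R := K%:R^-1 / 2.
Let d : R := h * (eps * eps).
Let c k : R := if full k then K%:R^-1 else h.
Let e k : R := if full k then 0 else h.
Let l : R := \sum_k c k + d.
Let P' : {ffun {ffun 'I_K -> 'I_M} -> R} := mix l (prod_distr mu) (prod_distr nu).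
Let p : {ffun 'I_K * 'I_M -> R} := joint (unif setT) (fun k => mix 2^-1 (mu k) (nu k)).
Let x (W : {ffun 'I_K -> {set 'I_M}}) k : R := \sum_(t in W k) mu k t.
Let y (W : {ffun 'I_K -> {set 'I_M}}) k : R := \sum_(t in W k) nu k t.

Let K_gt0 : (0 < K)%N. Proof. exact: leq_ltn_trans (leq0n ka) (ltn_ord ka). Qed.
Let K_neq0 : K%:R != 0 :> R. Proof. by rewrite pnatr_eq0 -lt0n. Qed.
Let eps_gt0 : 0 < eps. Proof. by rewrite invr_gt0 ltr0n; lia. Qed.
Let eps_le1 : eps <= 1. Proof. by rewrite invf_le1 ?ler1n ?ltr0n; lia. Qed.
Let h_gt0 : 0 < h. Proof. by rewrite divr_gt0 ?invr_gt0 ?ltr0n. Qed.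
Let hh : h + h = K%:R^-1. Proof. by rewrite /h -splitr. Qed.
Let d_ge0 : 0 <= d. Proof. by apply: mulr_ge0; [|apply: mulr_ge0]; apply: ltW. Qed.
Let d_le_h_eps : d <= h * eps.
Proof. by rewrite /d ler_wpM2l ?(ltW h_gt0) // ler_piMr // ltW. Qed.
Let h_le_c k : h <= c k.
Proof. by rewrite /c; case: ifP => _; rewrite // -hh lerDl ltW. Qed.
Let e_ge0 k : 0 <= e k.
Proof. by rewrite /e; case: ifP => _; rewrite ?(ltW h_gt0). Qed.
Let ce_sum : \sum_k c k + \sum_k e k = 1.
Proof.
rewrite -big_split /= (eq_bigr (fun=> K%:R^-1)) => [|k _]; last first.
  by rewrite /c /e; case: ifP; rewrite ?addr0.
by rewrite sumr_const card_ord -[LHS]mulr_natr mulVf.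
Qed.

Let Vc_neq0 k : Vc k != set0.
Proof.
rewrite /Vc; case: ifP => [_ | /negbT Vk]; first by rewrite -card_gt0 cardsT card_ord; lia.
by apply: contra Vk => /eqP Vc0; rewrite /full -[V k]setCK Vc0 setC0.
Qed.

Let V_neq0 k : V k != set0.
Proof. by case/andP: VI => /forallP. Qed.

Let lhs_eq (W : {ffun 'I_K -> {set 'I_M}}) :
  \sum_(z : {ffun 'I_K -> 'I_M} | [forall k, z k \in W k]) P' z
  = l * \prod_k x W k + (1 - l) * \prod_k y W k.
Proof. by rewrite sum_mix !sum_prod_distr_box. Qed.

Let rhs_eq (W : {ffun 'I_K -> {set 'I_M}}) :
  \sum_k \sum_(t in W k) p (k, t) = \sum_k c k * x W k + \sum_k e k * y W k.
Proof.
rewrite sum_joint_box -big_split; apply: eq_bigr => k _ /=.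
rewrite sum_mix ffunE inE cardsT card_ord mul1r -/(x W k) -/(y W k) /c /e.
case: ifP => [fk | _]; last by rewrite /h; field.
have -> : y W k = x W k by rewrite /y /x /nu /mu /Vc fk (eqP fk).
by rewrite mul0r addr0; field.
Qed.

Let x_bounds W k : 0 <= x W k <= 1. Proof. exact: unif_mass_bounds. Qed.
Let y_bounds W k : 0 <= y W k <= 1. Proof. exact: unif_mass_bounds. Qed.

Let d_le_sum_e : d <= \sum_k e k.
Proof.
apply: le_trans (sumr_ge_term ka e_ge0); rewrite /e /full (negbTE Vka).
by apply: le_trans d_le_h_eps _; rewrite ler_piMr ?(ltW h_gt0).
Qed.

Let witness_distr : is_distr P' /\ is_distr p.
Proof.
have mu_distr k : is_distr (mu k) by apply: is_distr_unif.
have nu_distr k : is_distr (nu k) by apply: is_distr_unif.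
split; last first.
  apply: is_distr_joint => [|k]; first by apply: is_distr_unif; rewrite -card_gt0 cardsT card_ord.
  by apply: is_distr_mix; rewrite ?invr_ge0 ?invf_le1 ?ler0n ?ler1n.
apply: is_distr_mix; try exact: is_distr_prod_distr.
have c_ge0 : 0 <= \sum_k c k by apply: sumr_ge0 => k _; apply: le_trans (h_le_c k); exact: ltW.
by apply/andP; split; have := ce_sum; have := d_le_sum_e; have := d_ge0; rewrite /l; lra.
Qed.

Let y_V_nonfull k : ~~ full k -> y V k = 0.
Proof. by move=> nf; apply/eqP; rewrite /y unif_mass_eq0 /Vc (negbTE nf) setICr. Qed.

Let witness_violates : ~ ineq_holds P' p V.
Proof.
rewrite /ineq_holds lhs_eq rhs_eq.
have xV k : x V k = 1 by apply/eqP; rewrite /x unif_mass_eq1.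
have -> : \prod_k x V k = 1 by apply: big1 => k _; exact: xV.
have -> : \prod_k y V k = 0 by rewrite (bigD1 ka) //= y_V_nonfull ?mul0r.
have -> : \sum_k c k * x V k = \sum_k c k by apply: eq_bigr => k _; rewrite xV mulr1.
have -> : \sum_k e k * y V k = 0.
  apply: big1 => k _; rewrite /e.
  by case: ifP => [_ | /negbT nf]; rewrite ?mul0r ?y_V_nonfull ?mulr0.
have : 0 < d by apply: mulr_gt0 => //; apply: mulr_gt0.
by rewrite /l; lra.
Qed.

Let c_ge0 k : 0 <= c k. Proof. exact: le_trans (ltW h_gt0) (h_le_c k). Qed.

Let other_nonfull k : exists2 i, i != k & ~~ full i.
Proof. by case: (eqVneq ka k) => [<- | kak]; [exists kb; rewrite 1?eq_sym | exists ka]. Qed.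

Let x_lt1_condition W j :
  x W j < 1 -> (\sum_(k | k != j) c k + d) * x W j <= \sum_(k | k != j) c k.
Proof.
move=> xj1; set E := \sum_(k | k != j) c k.
have [xj_le _] := unif_mass_gap R (V j) (W j); rewrite card_ord in xj_le.
have {xj1}xj_le := xj_le xj1; have /andP[xj0 _] := x_bounds W j.
have E_ge_h : h <= E.
  have [i ij _] := other_nonfull j.
  by rewrite /E (bigD1 i) //= (le_trans (h_le_c i)) // lerDl sumr_ge0.
have : (E + d) * x W j <= (E + d) * (1 - eps) by rewrite ler_wpM2l ?addr_ge0 ?sumr_ge0.
have : h * eps <= E * eps by rewrite ler_wpM2r ?(ltW eps_gt0).
have : 0 <= d * eps by rewrite mulr_ge0 ?(ltW eps_gt0).
have := d_le_h_eps; lra.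
Qed.

Let exists_nonfull_y_lt1 W : tupleI W -> (forall k, V k \subset W k) ->
  exists2 k, ~~ full k & y W k <= 1 - eps.
Proof.
case/andP=> _ /existsP[k Wk] VW; have [lt1 _] := unif_mass_gap R (Vc k) (W k).
rewrite card_ord in lt1.
have nfk : ~~ full k.
  by apply: contra Wk => /eqP fk; rewrite eqEsubset subsetT /= -fk VW.
exists k => //; apply: lt1; rewrite lt_neqAle unif_mass_eq1 // (proj2 (andP (y_bounds W k))).
rewrite andbT /Vc (negbTE nfk); apply: contra Wk => VcW.
by rewrite eqEsubset subsetT /= -(setUCr (V k)) subUset VW.
Qed.

Let exists_nonfull_y_gt0 W : W != V -> (forall k, V k \subset W k) ->
  exists2 k, ~~ full k & 0 < y W k.
Proof.
move=> WnV VW; have [k Wk] : exists k, ~~ (W k \subset V k).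
  apply/existsP; apply: contraNT WnV; rewrite negb_exists => /forallP WV.
  by apply/eqP/ffunP => k; apply/eqP; rewrite eqEsubset VW andbT; move: (WV k); rewrite negbK.
have nfk : ~~ full k by apply: contra Wk => /eqP ->; exact: subsetT.
exists k => //; rewrite lt0r (proj1 (andP (y_bounds W k))) andbT.
by rewrite unif_mass_eq0 /Vc (negbTE nfk) -setDE setD_eq0.
Qed.

Let d_le_slack_of_cover W : tupleI W -> W != V -> (forall k, V k \subset W k) ->
  d <= \sum_k e k * (y W k - \prod_i y W i).
Proof.
move=> WI WnV VW; set Y := \prod_i y W i.
have Y_le k : Y <= y W k by apply: prodr_le_factor => i; exact: y_bounds.
have terms_ge0 k : 0 <= e k * (y W k - Y) by rewrite mulr_ge0 // subr_ge0.
have e_nonfull k : ~~ full k -> e k = h by rewrite /e => /negbTE ->.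
have y_gap k : 0 < y W k -> eps <= y W k.
  by have [_ gt0] := unif_mass_gap R (Vc k) (W k); rewrite card_ord in gt0.
have [Y0 | Ypos] : Y = 0 \/ 0 < Y.
  have : 0 <= Y by apply: prodr_ge0 => i _; case/andP: (y_bounds W i).
  by rewrite le_eqVlt => /orP[/eqP <-|]; [left | right].
- have [j nfj yj] := exists_nonfull_y_gt0 WnV VW.
  apply: le_trans (sumr_ge_term j terms_ge0); rewrite Y0 subr0 e_nonfull //.
  by apply: le_trans d_le_h_eps _; rewrite ler_wpM2l ?(ltW h_gt0) ?y_gap.
(* If [Y > 0], a non-full coordinate [i <> k] has [y_i >= 1/M] and contributes
   [h * (y_i - Y) >= h * y_i * (1 - y_k) >= h / M^2]. *)
have [k nfk yk] := exists_nonfull_y_lt1 WI VW.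
have [i ik nfi] := other_nonfull k.
apply: le_trans (sumr_ge_term i terms_ge0); rewrite e_nonfull // ler_wpM2l ?(ltW h_gt0) //.
have yi_ge : eps <= y W i by apply: y_gap; exact: lt_le_trans (Y_le i).
have : Y <= y W i * y W k by apply: prodr_le_pair => // i'; exact: y_bounds.
have : eps * eps <= y W i * (1 - y W k) by apply: ler_pM; rewrite ?(ltW eps_gt0) //; lra.
lra.
Qed.

Let witness_satisfies W : tupleI W -> W != V -> ineq_holds P' p W.
Proof.
move=> WI WnV; rewrite /ineq_holds lhs_eq rhs_eq /l.
have [[j xj1] | x_full] : (exists j, x W j < 1) \/ (forall k, x W k = 1).
  case: (pickP (fun j => x W j < 1)) => [j | nolt]; [left; exists j | right => k] => //.
  by have /andP[_ xk1] := x_bounds W k; apply/eqP; rewrite eq_le xk1 /= leNgt nolt.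
- exact (mixture_le_of_gap (x_bounds W) (y_bounds W) c_ge0 e_ge0 ce_sum d_ge0
    (x_lt1_condition xj1) d_le_sum_e).
have VW k : V k \subset W k by rewrite -(unif_mass_eq1 R) //; apply/eqP; exact: x_full.
exact (mixture_le_of_full (y_bounds W) ce_sum d_ge0 x_full (d_le_slack_of_cover WI WnV VW)).
Qed.

Lemma two_nonfull_nonredundant :
  exists (P' : {ffun {ffun 'I_K -> 'I_M} -> R}) (p : {ffun 'I_K * 'I_M -> R}),
    [/\ is_distr P', is_distr p,
        (forall W, tupleI W -> W != V -> ineq_holds P' p W)
      & ~ ineq_holds P' p V].
Proof.
have [dP dp] := witness_distr.
by exists P', p; split; [| | exact: witness_satisfies | exact: witness_violates].
Qed.

End TwoNonfullWitness.

Lemma tupleS_nonredundant (R : realFieldType) (M K : nat) (V : {ffun 'I_K -> {set 'I_M}}) :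
  (1 < M)%N -> tupleS V ->
  exists (P' : {ffun {ffun 'I_K -> 'I_M} -> R}) (p : {ffun 'I_K * 'I_M -> R}),
    [/\ is_distr P', is_distr p,
        (forall W, tupleS W -> W != V -> ineq_holds P' p W)
      & ~ ineq_holds P' p V].
Proof.
move=> M1 /andP[VI /orP[pair | single]].
  case/existsP: pair => ka /existsP[kb /and3P[kab Vka Vkb]].
  have [P' [p [dP dp hold viol]]] := two_nonfull_nonredundant R M1 VI kab Vka Vkb.
  by exists P', p; split=> // W /andP[WI _]; exact: hold.
case/existsP: single => k0 /existsP[m /andP[/eqP Vk0 /forallP Vfull]].
have -> : V = tuple_at k0 [set~ m].
  apply/ffunP => k; rewrite ffunE; case: (eqVneq k k0) => [-> // | kk0].
  by apply/eqP; exact: implyP (Vfull k) kk0.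
have [m1 m1m] : exists m1, m1 != m by apply: exists_other; rewrite card_ord.
exact: tuple_setC1_nonredundant M1 m1m.
Qed.

Section Counting.
Variables (M K Q : nat).
Hypothesis M1 : (1 < M)%N.

Definition redundant_sets : {set {set 'I_M}} :=
  [set A | [&& A != set0, A != setT & [forall m, A != [set~ m]]]].

Lemma card_redundant_sets : #|redundant_sets| = (2 ^ M - M - 2)%N.
Proof.
pose C := [set [set~ m] | m : 'I_M].
have card_C : #|C| = M.
  by rewrite card_imset ?card_ord // => m m' /setC_inj /set1_inj.
have inC A : (A \in C) = [exists m, A == [set~ m]].
  by apply/imsetP/existsP => [[m _ ->] | [m /eqP ->]]; exists m.
have T_notin_C : setT \notin C by rewrite inC; apply/existsPn => m; rewrite eq_sym setC1_neqT.
have set0_notin : set0 \notin setT |: C.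
  rewrite !inE negb_or eq_sym -card_gt0 cardsT card_ord ltnW //= inC.
  by apply/existsPn => m; rewrite eq_sym setC1_neq0 ?card_ord.
have -> : redundant_sets = ~: (set0 |: (setT |: C)).
  by apply/setP => A; rewrite !inE inC !negb_or negb_exists.
rewrite cardsCs setCK cardsU1 set0_notin cardsU1 T_notin_C card_C.
by rewrite -cardsT -powersetT card_powerset cardsT card_ord /=; lia.
Qed.

Lemma notS_tuples_eq :
  [set V : {ffun 'I_K -> {set 'I_M}} | tupleI V && ~~ tupleS V]
  = [set tuple_at kA.1 kA.2 | kA in setX [set: 'I_K] redundant_sets].
Proof.
apply/setP => V; rewrite inE; apply/andP/imsetP => [[VI VnS] | [[k A]]].
  have [k [Vk VkA]] := tupleI_notS_single VI VnS.
  exists (k, V k) => //; rewrite !inE Vk /=; apply/andP; split.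
    by case/andP: VI => /forallP /(_ k).
  apply/forallP => m; apply: contraNneq VnS => Vkm.
  rewrite /tupleS VI /=; apply/orP; right; apply/existsP; exists k; apply/existsP; exists m.
  rewrite Vkm eqxx /=; apply/forallP => k'; apply/implyP => k'k.
  by rewrite VkA tuple_at_full.
rewrite !inE /= => /and3P[A0 AT /forallP AnC1] ->.
split; first exact: tupleI_tuple_at.
rewrite /tupleS tupleI_tuple_at //= negb_or; apply/andP; split.
  apply/negP => /existsP[a /existsP[b /and3P[ab Va Vb]]].
  case: (eqVneq a k) => [ak | /tuple_at_full Ta]; last by rewrite Ta eqxx in Va.
  by move: Vb; rewrite tuple_at_full ?eqxx // -ak eq_sym.
apply/negP => /existsP[a /existsP[m /andP[/eqP Va _]]].
case: (eqVneq a k) => [ak | /tuple_at_full Ta]; last by move: (setC1_neqT m); rewrite -Va Ta eqxx.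
by move: (AnC1 m); rewrite -Va ak tuple_at_id eqxx.
Qed.

Lemma card_notS_tuples :
  #|[set V : {ffun 'I_K -> {set 'I_M}} | tupleI V && ~~ tupleS V]| = (K * (2 ^ M - M - 2))%N.
Proof.
rewrite notS_tuples_eq card_in_imset ?cardsX ?cardsT ?card_ord ?card_redundant_sets //.
move=> [k A] [k' A']; rewrite !inE /= => /and3P[_ AT _] /and3P[_ A'T _] eqV.
have := congr1 (fun V : {ffun 'I_K -> {set 'I_M}} => V k) eqV; rewrite tuple_at_id.
case: (eqVneq k k') => [<- | kk' ]; first by rewrite tuple_at_id => ->.
by rewrite tuple_at_full // => AeqT; rewrite AeqT eqxx in AT.
Qed.

Lemma card_famI_famS :
  famS M K Q \subset famI M K Q /\
  #|famI M K Q| = (#|famS M K Q| + Q * K * (2 ^ M - M - 2))%N.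
Proof.
have sub : famS M K Q \subset famI M K Q by apply/subsetP => -[z V]; rewrite !inE => /andP[].
split=> //; rewrite -(cardsID (famS M K Q) (famI M K Q)) (setIidPr sub) -mulnA.
have -> : famI M K Q :\: famS M K Q
          = setX [set: 'I_Q] [set V | tupleI V && ~~ tupleS V].
  by apply/setP => -[z V]; rewrite !inE andbC.
by rewrite cardsX cardsT card_ord card_notS_tuples.
Qed.

End Counting.

Theorem theorem2 (R : realFieldType) (M K Q : nat) :
  (2 <= M)%N -> (2 <= K)%N -> (1 <= Q)%N ->
  (* equivalence: S and I define the same set of (P', P(.,.|Z)) *)
  (forall (P' : {ffun {ffun 'I_K -> 'I_M} -> R}) (P : 'I_Q -> {ffun 'I_K * 'I_M -> R}),
     is_distr P' -> (forall z, is_distr (P z)) ->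
     ((forall zV, zV \in famI M K Q -> ineq_holds P' (P zV.1) zV.2) <->
      (forall zV, zV \in famS M K Q -> ineq_holds P' (P zV.1) zV.2)))
  /\
  (* non-redundancy: within each z-polytope, every inequality of S can be
     violated while all other inequalities of S with index z (and the
     simplex constraints) hold *)
  (forall zV, zV \in famS M K Q ->
     exists (P' : {ffun {ffun 'I_K -> 'I_M} -> R}) (p : {ffun 'I_K * 'I_M -> R}),
       [/\ is_distr P', is_distr p,
           (forall zV', zV' \in famS M K Q -> zV'.1 = zV.1 -> zV' <> zV ->
              ineq_holds P' p zV'.2)
         & ~ ineq_holds P' p zV.2])
  /\
  (* counting: S has Q K (2^M - M - 2) fewer inequalities than I *)
  (famS M K Q \subset famI M K Q /\
   #|famI M K Q| = (#|famS M K Q| + Q * K * (2 ^ M - M - 2))%N).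
Proof.
move=> M1 _ _; split; [|split; last exact: card_famI_famS].
- move=> P' P dP dPz; split=> hold [z V]; rewrite inE => VF.
    by apply: hold; rewrite inE; case/andP: VF.
  by apply: (ineq_holds_of_tupleS dP (dPz z) M1) => // W WS; apply: (hold (z, W)); rewrite inE.
- move=> [z V]; rewrite inE => /(tupleS_nonredundant R M1)[P' [p [dP dp hold viol]]].
  exists P', p; split=> // -[z' W]; rewrite inE /= => WS <- zWzV.
  by apply: hold => //; apply/eqP => WV; apply: zWzV; rewrite WV.
Qed.
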